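(* Let $L$ be a sharp C-lattice. (i) If $x,y\in L$ are join principal elements with $(x:y)\vee(y:x)=x\vee y$, then $x\vee y=1$. (ii) If $L$ has a unique maximal element $m$ and $m=x_1\vee\cdots\vee x_n$ with $x_1,\dots,x_n$ join principal elements, then $m=x_i$ for some $i$.
   Context: A multiplicative lattice is a complete lattice $(L,\le)$ with bottom $0$ and top $1$ which is also a commutative monoid with identity $1$ such that $a(\bigvee_\alpha b_\alpha)=\bigvee_\alpha(ab_\alpha)$ for all $a,b_\alpha\in L$. For $x,y\in L$, $(y:x)=\bigvee\{a\in L: ax\le y\}$. An element $c$ is compact if $c\le\bigvee S$ implies $c\le\bigvee T$ for some finite $T\subseteq S$. A C-lattice is a multiplicative lattice in which $1$ is compact, the product of two compact elements is compact, and every element is a join of compact elements. A maximal element is a maximal element of $L\setminus\{1\}$. An element $x$ is join principal if $y\vee(z:x)=((yx\vee z):x)$ for all $y,z\in L$. $L$ is sharp if whenever $a_1a_2\le b$ with $a_1,a_2,b\in L$, there exist $b_1,b_2\in L$ with $a_i\le b_i$ ($i=1,2$) and $b=b_1b_2$. *)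

From Stdlib Require Import List.

Record mult_lattice := MultLattice {
  car :> Type;
  le : car -> car -> Prop;
  sup : (car -> Prop) -> car;
  mul : car -> car -> car;
  one : car;
  le_refl : forall x, le x x;
  le_trans : forall x y z, le x y -> le y z -> le x z;
  le_antisym : forall x y, le x y -> le y x -> x = y;
  sup_ub : forall (S : car -> Prop) x, S x -> le x (sup S);
  sup_least : forall (S : car -> Prop) u, (forall x, S x -> le x u) -> le (sup S) u;
  one_top : forall x, le x one;
  mulA : forall x y z, mul x (mul y z) = mul (mul x y) z;
  mulC : forall x y, mul x y = mul y x;
  mul1x : forall x, mul one x = x;
  mul_sup : forall a (S : car -> Prop),
      mul a (sup S) = sup (fun z => exists b, S b /\ z = mul a b)
}.

Arguments le {L} : rename.
Arguments sup {L} : rename.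
Arguments mul {L} : rename.
Arguments one {L} : rename.

Section Defs.
Variable L : mult_lattice.

Definition zero : L := sup (fun _ => False).

Definition join (x y : L) : L := sup (fun z => z = x \/ z = y).

Definition bigjoin (n : nat) (x : nat -> L) : L :=
  sup (fun z => exists i, i < n /\ z = x i).

Definition colon (y x : L) : L := sup (fun a => le (mul a x) y).

Definition compact (c : L) : Prop :=
  forall S : L -> Prop, le c (sup S) ->
    exists T : list L, (forall t, In t T -> S t) /\ le c (sup (fun t => In t T)).

Definition C_lattice : Prop :=
  compact one /\
  (forall a b : L, compact a -> compact b -> compact (mul a b)) /\
  (forall x : L, x = sup (fun c => compact c /\ le c x)).

Definition maximal (m : L) : Prop :=
  m <> one /\ forall y : L, le m y -> y <> one -> y = m.

Definition join_principal (x : L) : Prop :=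
  forall y z : L, join y (colon z x) = colon (join (mul y x) z) x.

Definition sharp : Prop :=
  forall a1 a2 b : L, le (mul a1 a2) b ->
    exists b1 b2, le a1 b1 /\ le a2 b2 /\ b = mul b1 b2.

End Defs.

Arguments zero {L}.
Arguments join {L}.
Arguments bigjoin {L}.
Arguments colon {L}.
Arguments compact {L}.
Arguments maximal {L}.
Arguments join_principal {L}.
Arguments C_lattice : clear implicits.
Arguments sharp : clear implicits.

(* If x is join principal and (w : x) <= x v w, sharpness forces
   (x v w)^2 = x^2 v w: in a factorisation x^2 v w = p q with p, q >= x v w,
   both p and q lie below (x^2 v w : x) = x v (w : x) <= x v w.  On the other
   hand x <= x^2 v w gives 1 <= (x^2 v w : x) = x v (w : x).
   For (i), the identity for (x, y) and for (y, x) gives x <= x^2 v y.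
   For (ii), every proper element lies below m (Zorn's lemma, using that 1 is
   compact), so x v (w : x) = 1 means x <= w.  Write m = x_0 v w_0 = x_1 v w_1,
   where w_i is the join of the other generators.  Either x_1 <= w_1, or
   m^2 = x_1^2 v w_1 >= x_0, and since m^2 <= x_0^2 v w_0 this gives x_0 <= w_0.
   Either way a generator is redundant, and we conclude by induction on n. *)

From Stdlib Require Import List Arith Classical Lia.
From mathcomp Require boolp classical_sets.

Section MultLattice.
Context {L : mult_lattice}.
Implicit Types a b c t w x y z : L.

Lemma join_ub_l a b : le a (join a b).
Proof. apply sup_ub. auto. Qed.

Lemma join_ub_r a b : le b (join a b).
Proof. apply sup_ub. auto. Qed.

Lemma join_least a b c : le a c -> le b c -> le (join a b) c.
Proof. intros Ha Hb. apply sup_least. intros z [-> | ->]; assumption. Qed.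

Lemma join_comm a b : join a b = join b a.
Proof. apply le_antisym; apply join_least; auto using join_ub_l, join_ub_r. Qed.

Lemma join_absorb_l a b : le a b -> join a b = b.
Proof.
  intros H. apply le_antisym; [apply join_least, le_refl | apply join_ub_r]; exact H.
Qed.

Lemma mul_joinr a b c : mul a (join b c) = join (mul a b) (mul a c).
Proof.
  unfold join at 1. rewrite mul_sup. apply le_antisym.
  - apply sup_least. intros z [t [[-> | ->] ->]]; auto using join_ub_l, join_ub_r.
  - apply join_least; apply sup_ub; eauto.
Qed.

Lemma mul_mono_r a b c : le b c -> le (mul a b) (mul a c).
Proof. intros H. rewrite <- (join_absorb_l b c H), mul_joinr. apply join_ub_l. Qed.

Lemma mul_mono_l a b c : le b c -> le (mul b a) (mul c a).
Proof. intros H. rewrite (mulC _ b), (mulC _ c). apply mul_mono_r, H. Qed.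

Lemma mul_le_r a b : le (mul a b) b.
Proof. rewrite <- (mul1x _ b) at 2. apply mul_mono_l, one_top. Qed.

Lemma colon_mul z x : le (mul (colon z x) x) z.
Proof.
  rewrite mulC. unfold colon. rewrite mul_sup. apply sup_least.
  intros u [b [Hb ->]]. rewrite mulC. exact Hb.
Qed.

Lemma le_colon t z x : le (mul t x) z <-> le t (colon z x).
Proof.
  split; intros H.
  - apply sup_ub, H.
  - eapply le_trans; [apply mul_mono_l, H | apply colon_mul].
Qed.

Lemma colon_eq_one z x : colon z x = one -> le x z.
Proof. intros E. rewrite <- (mul1x _ x), <- E. apply colon_mul. Qed.

Lemma sq_join_le x w : le (mul (join x w) (join x w)) (join (mul x x) w).
Proof.
  rewrite mul_joinr. apply join_least.
  - rewrite mulC, mul_joinr. apply join_least; [apply join_ub_l |].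
    eapply le_trans; [apply mul_le_r | apply join_ub_r].
  - eapply le_trans; [apply mul_le_r | apply join_ub_r].
Qed.

Lemma join_principal_colon_sq x w :
  join_principal x -> le x (join (mul x x) w) -> join x (colon w x) = one.
Proof.
  intros Hx H. apply le_antisym; [apply one_top |].
  rewrite Hx. apply le_colon. rewrite mul1x. exact H.
Qed.

Lemma sharp_sq_join x w : sharp L -> join_principal x ->
  le (colon w x) (join x w) -> mul (join x w) (join x w) = join (mul x x) w.
Proof.
  intros hS Hx Hw. set (a := join x w).
  destruct (hS a a _ (sq_join_le x w)) as [p [q [Hp [Hq E]]]].
  assert (Hcolon : le (colon (join (mul x x) w) x) a).
  { rewrite <- Hx. apply join_least; [apply join_ub_l | exact Hw]. }
  assert (Hxa : le x a) by apply join_ub_l.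
  assert (Ep : p = a).
  { apply le_antisym; [| exact Hp]. eapply le_trans; [| exact Hcolon].
    apply le_colon. rewrite E. apply mul_mono_r. eapply le_trans; eassumption. }
  assert (Eq : q = a).
  { apply le_antisym; [| exact Hq]. eapply le_trans; [| exact Hcolon].
    apply le_colon. rewrite E, (mulC _ p). apply mul_mono_r.
    eapply le_trans; eassumption. }
  rewrite E, Ep, Eq. reflexivity.
Qed.

Lemma join_principal_join_eq_one x y : sharp L ->
  join_principal x -> join_principal y ->
  join (colon x y) (colon y x) = join x y -> join x y = one.
Proof.
  intros hS Hx Hy H.
  assert (Hyx : le (colon y x) (join x y)) by (rewrite <- H; apply join_ub_r).
  assert (Hxy : le (colon x y) (join y x)) by (rewrite join_comm, <- H; apply join_ub_l).
  pose proof (sharp_sq_join x y hS Hx Hyx) as Exy.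
  pose proof (sharp_sq_join y x hS Hy Hxy) as Eyx.
  rewrite (join_comm y x), Exy in Eyx.
  assert (Hsq : le x (join (mul x x) y)) by (rewrite Eyx; apply join_ub_r).
  apply le_antisym; [apply one_top |].
  rewrite <- (join_principal_colon_sq x y Hx Hsq).
  apply join_least; [apply join_ub_l | exact Hyx].
Qed.

Lemma chain_list_ub (S : L -> Prop) s0 : S s0 ->
  (forall s t, S s -> S t -> le s t \/ le t s) ->
  forall l, (forall t, In t l -> S t) -> exists s, S s /\ forall t, In t l -> le t s.
Proof.
  intros Hs0 Hchain l. induction l as [| t l IH]; intros Hl.
  - exists s0. split; [exact Hs0 | intros t []].
  - destruct IH as [s [Hs Hub]]; [intros u Hu; apply Hl; right; exact Hu |].
    assert (Ht : S t) by (apply Hl; left; reflexivity).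
    destruct (Hchain t s Ht Hs) as [Hts | Hst].
    + exists s. split; [exact Hs |]. intros u [<- | Hu]; auto.
    + exists t. split; [exact Ht |].
      intros u [<- | Hu]; [apply le_refl | eapply le_trans; eauto].
Qed.

Lemma chain_sup_neq_one (S : L -> Prop) s0 : compact (one : L) -> S s0 ->
  (forall s t, S s -> S t -> le s t \/ le t s) ->
  (forall s, S s -> s <> one) -> sup S <> one.
Proof.
  intros h1 Hs0 Hchain Hproper E.
  assert (H1 : le one (sup S)) by (rewrite E; apply le_refl).
  destruct (h1 S H1) as [l [Hl Hle]].
  destruct (chain_list_ub S s0 Hs0 Hchain l Hl) as [s [Hs Hub]].
  apply (Hproper s Hs), le_antisym; [apply one_top |].
  eapply le_trans; [exact Hle | apply sup_least, Hub].
Qed.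

Lemma exists_maximal_ge t0 : compact (one : L) -> t0 <> one ->
  exists m, maximal m /\ le t0 m.
Proof.
  intros h1 Ht0.
  set (T := {t : L | le t0 t /\ t <> one}).
  set (R := fun s t : T => boolp.asbool (le (proj1_sig s) (proj1_sig t))).
  assert (Rle : forall s t : T, R s t = true -> le (proj1_sig s) (proj1_sig t))
    by (intros s t; apply boolp.asboolW).
  destruct (@classical_sets.ZL_preorder T (exist _ t0 (conj (le_refl _ t0) Ht0)) R)
    as [[m [Hm Hm1]] Hmax].
  - intros t. apply boolp.asboolT, le_refl.
  - intros r s t Hrs Hst. apply boolp.asboolT. eapply le_trans; apply Rle; eassumption.
  - intros A HA.
    destruct (classic (exists s, A s)) as [[a0 Ha0] | Hempty].
    2: { exists (exist _ t0 (conj (le_refl _ t0) Ht0)).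
         intros s Hs. exfalso. eauto. }
    set (S := fun z => exists s, A s /\ z = proj1_sig s).
    assert (HS : forall s, A s -> le (proj1_sig s) (sup S))
      by (intros s Hs; apply sup_ub; exists s; auto).
    assert (Hsup : sup S <> one).
    { apply (chain_sup_neq_one S (proj1_sig a0) h1); [exists a0; auto | |].
      - intros s t [s' [Hs' ->]] [t' [Ht' ->]].
        destruct (HA s' t' Hs' Ht'); [left | right]; apply Rle; assumption.
      - intros s [s' [_ ->]]. exact (proj2 (proj2_sig s')). }
    assert (Ht0S : le t0 (sup S))
      by (eapply le_trans; [exact (proj1 (proj2_sig a0)) | apply HS, Ha0]).
    exists (exist _ (sup S) (conj Ht0S Hsup)).
    intros s Hs. apply boolp.asboolT, HS, Hs.
  - exists m. split; [split; [exact Hm1 |] | exact Hm].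
    intros y Hy Hy1.
    assert (Ht0y : le t0 y) by (eapply le_trans; eassumption).
    apply le_antisym; [| exact Hy].
    apply (Rle (exist _ y (conj Ht0y Hy1)) (exist _ m (conj Hm Hm1))), Hmax.
    apply boolp.asboolT, Hy.
Qed.

Lemma le_unique_maximal m : compact (one : L) ->
  (forall m', maximal m' -> m' = m) -> forall t, t <> one -> le t m.
Proof.
  intros h1 Hu t Ht. destruct (exists_maximal_ge t h1 Ht) as [m' [Hm' Htm']].
  rewrite <- (Hu m' Hm'). exact Htm'.
Qed.

Definition skip (k : nat) (x : nat -> L) (i : nat) : L :=
  x (if Nat.ltb i k then i else S i).

Lemma skip_range k n (x : nat -> L) i : k <= n -> i < n ->
  exists j, j < S n /\ skip k x i = x j.
Proof.
  intros Hk Hi. unfold skip.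
  destruct (Nat.ltb_spec i k); eexists; split; [| reflexivity | | reflexivity]; lia.
Qed.

Lemma bigjoin_1 (x : nat -> L) : bigjoin 1 x = x 0.
Proof.
  apply le_antisym.
  - apply sup_least. intros z [i [Hi ->]]. replace i with 0 by lia. apply le_refl.
  - apply sup_ub. exists 0. split; [lia | reflexivity].
Qed.

Lemma bigjoin_skip n k (x : nat -> L) : k <= n ->
  bigjoin (S n) x = join (x k) (bigjoin n (skip k x)).
Proof.
  intros Hk. apply le_antisym.
  - apply sup_least. intros z [i [Hi ->]].
    destruct (Nat.lt_trichotomy i k) as [Hik | [-> | Hki]].
    + eapply le_trans; [| apply join_ub_r]. apply sup_ub. exists i.
      unfold skip. destruct (Nat.ltb_spec i k); split; [lia | reflexivity | lia | lia].
    + apply join_ub_l.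
    + eapply le_trans; [| apply join_ub_r]. apply sup_ub. exists (pred i).
      unfold skip. destruct (Nat.ltb_spec (pred i) k); [lia |].
      split; [lia |]. f_equal. lia.
  - apply join_least.
    + apply sup_ub. exists k. split; [lia | reflexivity].
    + apply sup_least. intros z [i [Hi ->]].
      destruct (skip_range k n x i Hk Hi) as [j [Hj ->]].
      apply sup_ub. exists j. auto.
Qed.

End MultLattice.

Section QuasiLocal.
Context {L : mult_lattice}.
Implicit Types w x : L.
Variable m : L.
Hypothesis m_neq_one : m <> one.
Hypothesis le_m : forall t : L, t <> one -> le t m.
Hypothesis hS : sharp L.

Lemma join_eq_one_cases (a b : L) : join a b = one -> a = one \/ b = one.
Proof.
  intros E. apply NNPP. intros Hne. apply m_neq_one, le_antisym; [apply one_top |].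
  rewrite <- E. apply join_least; apply le_m; intros ->; auto.
Qed.

Lemma join_principal_le_sq_join x w : join_principal x -> le x m ->
  le x (join (mul x x) w) -> le x w.
Proof.
  intros Hx Hxm H.
  destruct (join_eq_one_cases _ _ (join_principal_colon_sq x w Hx H)) as [-> | E].
  - exfalso. apply m_neq_one, le_antisym; [apply one_top | exact Hxm].
  - apply colon_eq_one, E.
Qed.

Lemma join_principal_join_eq_m x w : join_principal x -> join x w = m ->
  le x w \/ mul m m = join (mul x x) w.
Proof.
  intros Hx E.
  destruct (classic (colon w x = one)) as [H | H]; [left; apply colon_eq_one, H |].
  right. rewrite <- E. apply sharp_sq_join; [exact hS | exact Hx |].
  rewrite E. apply le_m, H.
Qed.

Lemma join_principal_exchange x0 w0 x1 w1 :
  join_principal x0 -> join_principal x1 -> join x0 w0 = m -> join x1 w1 = m ->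
  le x0 w1 -> le x0 w0 \/ le x1 w1.
Proof.
  intros J0 J1 E0 E1 H01.
  destruct (join_principal_join_eq_m x1 w1 J1 E1) as [H | Esq]; [right; exact H | left].
  apply join_principal_le_sq_join; [exact J0 | rewrite <- E0; apply join_ub_l |].
  eapply le_trans; [exact H01 |].
  assert (Hw1 : le w1 (mul m m)) by (rewrite Esq; apply join_ub_r).
  eapply le_trans; [exact Hw1 |]. rewrite <- E0. apply sq_join_le.
Qed.

Lemma join_principal_bigjoin_eq_m n (x : nat -> L) : 1 <= n ->
  (forall i, i < n -> join_principal (x i)) -> m = bigjoin n x ->
  exists i, i < n /\ m = x i.
Proof.
  revert x. induction n as [| n IH]; intros x Hn Hx Em; [lia |].
  destruct n as [| n].
  { exists 0. split; [lia |]. rewrite Em. apply bigjoin_1. }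
  assert (Hred : exists k, k <= 1 /\ le (x k) (bigjoin (S n) (skip k x))).
  { assert (Ek : forall k, k <= 1 -> join (x k) (bigjoin (S n) (skip k x)) = m)
      by (intros k Hk; rewrite Em; symmetry; apply bigjoin_skip; lia).
    assert (H01 : le (x 0) (bigjoin (S n) (skip 1 x)))
      by (apply sup_ub; exists 0; split; [lia | reflexivity]).
    destruct (join_principal_exchange _ _ _ _ (Hx 0 ltac:(lia)) (Hx 1 ltac:(lia))
                (Ek 0 ltac:(lia)) (Ek 1 ltac:(lia)) H01) as [H | H].
    - exists 0. auto.
    - exists 1. auto. }
  destruct Hred as [k [Hk Hle]].
  rewrite (bigjoin_skip (S n) k x), join_absorb_l in Em by (lia || exact Hle).
  destruct (IH (skip k x)) as [i [Hi Ei]]; [lia | | exact Em |].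
  - intros i Hi. destruct (skip_range k (S n) x i) as [j [Hj ->]]; [lia | exact Hi |].
    apply Hx, Hj.
  - destruct (skip_range k (S n) x i) as [j [Hj Ej]]; [lia | exact Hi |].
    exists j. rewrite Ei, Ej. auto.
Qed.

End QuasiLocal.

Theorem theorem2p5 (L : mult_lattice) (hC : C_lattice L) (hS : sharp L) :
  (forall x y : L, join_principal x -> join_principal y ->
     join (colon x y) (colon y x) = join x y -> join x y = one)
  /\
  (forall m : L, maximal m -> (forall m' : L, maximal m' -> m' = m) ->
     forall (n : nat) (x : nat -> L), 1 <= n ->
       (forall i, i < n -> join_principal (x i)) ->
       m = bigjoin n x ->
       exists i, i < n /\ m = x i).
Proof.
  split.
  - intros x y. exact (join_principal_join_eq_one x y hS).
  - intros m Hm Hu.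
    exact (join_principal_bigjoin_eq_m m (proj1 Hm)
             (le_unique_maximal m (proj1 hC) Hu) hS).
Qed.
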